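(* Let $m,n$ be non-negative integers. For $y\in\mathbb{R}$ define \[ R_{m,n}(y)=\int_{-1}^1U_n(x)\,U_{n+m}(x+y)\sqrt{1-x^2}\,dx . \] Then \[ R_{m,n}(y)=\dfrac{\pi\,\Gamma(m+n+1)}{\Gamma(m+1)\Gamma(n+1)}2^{m-1}y^m\ {}_4F_3\left(\begin{array}{c}-\frac{m}{2},\frac{1-m}{2},\frac{1-m}{2},\frac{2-m}{2}\\ 1-m,\ -m-n,\ n+2\end{array};\dfrac{4}{y^2}\right). \]
   Context: $U_n$ is the Chebyshev polynomial of the second kind, $U_n(\cos\theta)=\frac{\sin((n+1)\theta)}{\sin\theta}$. ${}_4F_3$ is the generalized hypergeometric series $\sum_k\frac{(a_1)_k\cdots(a_4)_k}{(b_1)_k(b_2)_k(b_3)_k}\frac{z^k}{k!}$ with $(a)_k$ the Pochhammer symbol; here it terminates (at the first upper parameter that is a non-positive integer), so $y^m\,{}_4F_3(\dots;4/y^2)$ is a polynomial in $y$ and the right-hand side is understood as this polynomial. *)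

From Stdlib Require Import Reals Arith Factorial.
From Coquelicot Require Import Coquelicot.
Open Scope R_scope.

(* Chebyshev polynomials of the second kind, as polynomial functions on R:
   U_0 = 1, U_1 = 2x, U_(n+2) = 2x U_(n+1) - U_n
   (equivalently U_n(cos t) = sin((n+1)t)/sin t). *)
Fixpoint chebU (n : nat) (x : R) : R :=
  match n with
  | O => 1
  | S n' =>
      match n' with
      | O => 2 * x
      | S n'' => 2 * x * chebU n' x - chebU n'' x
      end
  end.

Fixpoint poch (a : R) (k : nat) : R :=
  match k with
  | O => 1
  | S k' => poch a k' * (a + INR k')
  end.

Definition hyp43_coef (a1 a2 a3 a4 b1 b2 b3 : R) (k : nat) : R :=
  poch a1 k * poch a2 k * poch a3 k * poch a4 k
  / (poch b1 k * poch b2 k * poch b3 k * INR (fact k)).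

(* The terminating series  y^m * 4F3(a;b; 4/y^2), read as the polynomial in y
   sum_(k=0..N) coef_k * 4^k * y^(m-2k), where N is the termination index. *)
Definition ym_hyp43_poly (m N : nat) (a1 a2 a3 a4 b1 b2 b3 y : R) : R :=
  sum_f_R0 (fun k => hyp43_coef a1 a2 a3 a4 b1 b2 b3 k * 4 ^ k * y ^ (m - 2 * k)) N.

(* Termination index for the upper parameters -m/2, (1-m)/2, (1-m)/2, (2-m)/2:
   m = 0: the parameter -m/2 = 0 gives N = 0;
   m even >= 2: the parameter (2-m)/2 = -(m/2 - 1) gives N = m/2 - 1;
   m odd: the parameter (1-m)/2 = -(m-1)/2 gives N = (m-1)/2.
   In all cases N = floor((m-1)/2) (with 0 for m = 0). *)
Definition term_index (m : nat) : nat := Nat.div2 (m - 1).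

Definition Rmn (m n : nat) (y : R) : R :=
  RInt (fun x => chebU n x * chebU (n + m) (x + y) * sqrt (1 - x ^ 2)) (-1) 1.

From Stdlib Require Import Reals Arith Factorial Lra Lia.
From Coquelicot Require Import Coquelicot.
Open Scope R_scope.

(* Write M(N, j) for the integral of U_j(x) U_N(x + y) sqrt(1 - x^2) over [-1, 1], so that
   R_{m,n}(y) = M(n + m, n).  Expanding U_{N+1}(x + y) = 2(x + y) U_N(x + y) - U_{N-1}(x + y)
   and using 2x U_j(x) = U_{j+1}(x) + U_{j-1}(x) gives, with U_{-1} = 0,
     M(N + 1, j) = 2y M(N, j) + M(N, j + 1) + M(N, j - 1) - M(N - 1, j),
   while orthogonality (x = cos t) gives the first row M(0, j) = (pi/2) [j = 0].  The
   recurrence determines M from its first row, so it suffices to check it for the explicit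
   family (pi/2) P_{N-j,j}(y) (and 0 for j > N), where the coefficient of y^(m-2k) in P_{m,n} is
   2^(m-2k) (k+j)! (n+k+j+1)! (n+1) / (k! j! (j+1)! (n+k+1)!) with j = m - 2k - 1;
   coefficientwise this is a rational identity between factorials.  Finally the
   duplication formula (a/2)_k ((a+1)/2)_k = (a)_(2k) / 4^k and (-p)_k = (-1)^k p!/(p-k)!
   turn the k-th term of the 4F3 into exactly this coefficient. *)

Definition pred0 (f : nat -> R) (n : nat) : R :=
  match n with O => 0 | S n' => f n' end.

Lemma pred0_minus (f g : nat -> R) n : pred0 (fun i => f i - g i) n = pred0 f n - pred0 g n.
Proof. destruct n; simpl; ring. Qed.

Lemma sum_f_R0_zero_tail (f : nat -> R) K L :
  (K <= L)%nat -> (forall k, (K < k <= L)%nat -> f k = 0) -> sum_f_R0 f L = sum_f_R0 f K.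
Proof.
  intros HKL Hz. induction L as [|L IH].
  - replace K with O by lia. reflexivity.
  - destruct (Nat.eq_dec K (S L)) as [->|HK]; [reflexivity|].
    simpl. rewrite IH, Hz by (lia || (intros; apply Hz; lia)). ring.
Qed.

Lemma sum_f_R0_pred0 (f : nat -> R) L : sum_f_R0 (pred0 f) (S L) = sum_f_R0 f L.
Proof. rewrite decomp_sum by lia. apply Rplus_0_l. Qed.

Lemma sum_f_R0_scal_l (a : R) (f : nat -> R) L :
  sum_f_R0 (fun k => a * f k) L = a * sum_f_R0 f L.
Proof. rewrite scal_sum. apply sum_eq. intros. apply Rmult_comm. Qed.

Lemma RInt_lincomb (a : R) (f g h k : R -> R) lo hi :
  ex_RInt f lo hi -> ex_RInt g lo hi -> ex_RInt h lo hi -> ex_RInt k lo hi ->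
  RInt (fun x => a * f x + g x + h x - k x) lo hi
  = a * RInt f lo hi + RInt g lo hi + RInt h lo hi - RInt k lo hi.
Proof.
  intros Hf Hg Hh Hk. apply is_RInt_unique.
  apply (is_RInt_minus (V := R_NormedModule)); [|apply (RInt_correct k), Hk].
  apply (is_RInt_plus (V := R_NormedModule)); [|apply (RInt_correct h), Hh].
  apply (is_RInt_plus (V := R_NormedModule)); [|apply (RInt_correct g), Hg].
  apply (is_RInt_scal (V := R_NormedModule)), (RInt_correct f), Hf.
Qed.

(** * Chebyshev polynomials of the second kind *)

Definition chebU_pred (n : nat) (x : R) : R :=
  match n with O => 0 | S n' => chebU n' x end.

Lemma chebU_S n x : chebU (S n) x = 2 * x * chebU n x - chebU_pred n x.
Proof. destruct n; simpl; ring. Qed.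

Lemma chebU_cos_mul_sin n t : chebU n (cos t) * sin t = sin (INR (S n) * t).
Proof.
  enough (H : chebU n (cos t) * sin t = sin (INR (S n) * t)
              /\ chebU_pred n (cos t) * sin t = sin (INR n * t)) by apply H.
  induction n as [|n [IHn IHpred]].
  - simpl. rewrite !Rmult_0_l, !Rmult_1_l, sin_0. split; reflexivity.
  - split; [|exact IHn].
    rewrite chebU_S, Rmult_minus_distr_r, Rmult_assoc, Rmult_assoc, IHn, IHpred.
    replace (INR (S (S n)) * t) with (INR (S n) * t + t) by (rewrite !S_INR; ring).
    replace (INR n * t) with (INR (S n) * t - t) by (rewrite !S_INR; ring).
    rewrite sin_plus, sin_minus. ring.
Qed.

Lemma continuous_chebU n x : continuous (chebU n) x.
Proof.
  revert x.
  enough (H : (forall x, continuous (chebU n) x) /\ (forall x, continuous (chebU_pred n) x))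
    by apply H.
  induction n as [|n [IHn IHpred]].
  - split; intros x; apply continuous_const.
  - split; [|exact IHn]. intros x.
    apply (continuous_ext (fun x => 2 * x * chebU n x - chebU_pred n x));
      [intros; symmetry; apply chebU_S|].
    apply (@continuous_minus R_UniformSpace R_AbsRing); [|apply IHpred].
    apply (@continuous_mult R_UniformSpace R_AbsRing); [|apply IHn].
    apply (@continuous_mult R_UniformSpace R_AbsRing);
      [apply continuous_const | apply continuous_id].
Qed.

Lemma continuous_chebU_pred n x : continuous (chebU_pred n) x.
Proof. destruct n; [apply continuous_const | apply continuous_chebU]. Qed.

Lemma continuous_weight x : continuous (fun x => sqrt (1 - x ^ 2)) x.
Proof.
  apply continuous_sqrt_comp, (ex_derive_continuous (fun x => 1 - x ^ 2)).
  auto_derive. exact I.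
Qed.

Lemma is_RInt_cos_nat_mul r :
  is_RInt (fun t => cos (INR r * t)) 0 PI (match r with O => PI | S _ => 0 end).
Proof.
  destruct r as [|r].
  - apply (is_RInt_ext (fun _ => 1)).
    { intros t _. rewrite Rmult_0_l, cos_0. reflexivity. }
    replace PI with (scal (PI - 0) 1) at 2 by (unfold scal; simpl; unfold mult; simpl; ring).
    apply (is_RInt_const (V := R_NormedModule)).
  - set (c := INR (S r)).
    assert (Hc : 0 < c) by (apply lt_0_INR; lia).
    replace 0 with (minus (sin (c * PI) / c) (sin (c * 0) / c)) at 2.
    + apply (is_RInt_derive (fun t => sin (c * t) / c)).
      * intros t _. auto_derive; [exact I|]. field. lra.
      * intros t _. apply (ex_derive_continuous (fun t => cos (c * t))).
        auto_derive. exact I.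
    + rewrite Rmult_0_r, sin_0, (sin_eq_0_1 (c * PI)).
      * unfold minus, plus, opp; simpl. field. lra.
      * exists (Z.of_nat (S r)). unfold c. rewrite INR_IZR_INZ. reflexivity.
Qed.

Lemma RInt_sin_mul_sin q :
  RInt (fun t => sin t * sin (INR (S q) * t)) 0 PI = match q with O => PI / 2 | S _ => 0 end.
Proof.
  rewrite (RInt_ext _ (fun t => scal (/ 2) (minus (cos (INR q * t)) (cos (INR (S (S q)) * t))))).
  2:{ intros t _. change (sin t * sin (INR (S q) * t)
                          = / 2 * (cos (INR q * t) - cos (INR (S (S q)) * t))).
      rewrite (S_INR (S q)).
      replace (INR q * t) with (INR (S q) * t - t) by (rewrite S_INR; ring).
      rewrite Rmult_plus_distr_r, Rmult_1_l, cos_minus, cos_plus. field. }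
  rewrite (is_RInt_unique _ _ _ _ (is_RInt_scal _ _ _ _ _
             (is_RInt_minus _ _ _ _ _ _ (is_RInt_cos_nat_mul q)
                (is_RInt_cos_nat_mul (S (S q)))))).
  destruct q; unfold scal, minus, plus, opp; simpl; unfold mult; simpl; field.
Qed.

Lemma RInt_chebU_weight j :
  RInt (fun x => chebU j x * sqrt (1 - x ^ 2)) (-1) 1 = match j with O => PI / 2 | S _ => 0 end.
Proof.
  set (f := fun x => chebU j x * sqrt (1 - x ^ 2)).
  set (g := fun t => sin t * sin (INR (S j) * t)).
  assert (Hsubst := RInt_comp f cos (fun t => - sin t) PI 0).
  rewrite cos_PI, cos_0 in Hsubst. rewrite <- Hsubst.
  - assert (Hg : ex_RInt g PI 0).
    { apply (ex_RInt_continuous (V := R_CompleteNormedModule)). intros t _.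
      apply (ex_derive_continuous g). unfold g. auto_derive. exact I. }
    rewrite (RInt_ext _ (fun t => opp (g t))).
    + rewrite (RInt_opp (V := R_CompleteNormedModule)), opp_RInt_swap by exact Hg.
      apply RInt_sin_mul_sin.
    + intros t Ht. rewrite Rmin_right, Rmax_left in Ht by (pose proof PI_RGT_0; lra).
      assert (Hsin : 0 < sin t) by (apply sin_gt_0; lra).
      change (- sin t * (chebU j (cos t) * sqrt (1 - cos t ^ 2)) = - g t).
      replace (1 - cos t ^ 2) with (sin t ^ 2) by (rewrite <- (sin2_cos2 t); unfold Rsqr; ring).
      rewrite sqrt_pow2, chebU_cos_mul_sin by lra. unfold g. ring.
  - intros t _. apply (@continuous_mult R_UniformSpace R_AbsRing);
      [apply continuous_chebU | apply continuous_weight].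
  - intros t _. split.
    + auto_derive; [exact I | ring].
    + apply (ex_derive_continuous (fun t => - sin t)). auto_derive. exact I.
Qed.

(** * The moment recurrence *)

Definition chebU_recurrence (y : R) (F : nat -> nat -> R) : Prop :=
  forall N j, F (S N) j = 2 * y * F N j + F N (S j) + pred0 (F N) j - pred0 (fun M => F M j) N.

Lemma chebU_recurrence_scal y c F :
  chebU_recurrence y F -> chebU_recurrence y (fun N j => c * F N j).
Proof.
  intros HF N j. rewrite HF.
  destruct j, N; simpl; ring.
Qed.

Lemma chebU_recurrence_unique y F G :
  chebU_recurrence y F -> chebU_recurrence y G -> (forall j, F O j = G O j) ->
  forall N j, F N j = G N j.
Proof.
  intros HF HG H0 N.
  enough (H : forall j, F N j = G N j /\ pred0 (fun M => F M j) N = pred0 (fun M => G M j) N)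
    by (intros j; apply H).
  induction N as [|N IH]; intros j.
  - split; [apply H0 | reflexivity].
  - split; [|apply IH].
    rewrite HF, HG, (proj1 (IH j)), (proj1 (IH (S j))), (proj2 (IH j)).
    destruct j; simpl; [|rewrite (proj1 (IH j))]; reflexivity.
Qed.

Definition shifted_pairing (y : R) (u v : R -> R) : R :=
  RInt (fun x => u x * v (x + y) * sqrt (1 - x ^ 2)) (-1) 1.

Definition cheb_moment (y : R) (N j : nat) : R := shifted_pairing y (chebU j) (chebU N).

Lemma ex_RInt_shifted_pairing y u v :
  (forall x, continuous u x) -> (forall x, continuous v x) ->
  ex_RInt (fun x => u x * v (x + y) * sqrt (1 - x ^ 2)) (-1) 1.
Proof.
  intros Hu Hv. apply (ex_RInt_continuous (V := R_CompleteNormedModule)). intros x _.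
  apply (@continuous_mult R_UniformSpace R_AbsRing); [|apply continuous_weight].
  apply (@continuous_mult R_UniformSpace R_AbsRing); [apply Hu|].
  apply (continuous_comp (fun x => x + y) v); [|apply Hv].
  apply (@continuous_plus R_UniformSpace R_AbsRing R_NormedModule);
    [apply continuous_id | apply continuous_const].
Qed.

Lemma shifted_pairing_chebU_pred_l y j v :
  shifted_pairing y (chebU_pred j) v = pred0 (fun i => shifted_pairing y (chebU i) v) j.
Proof.
  destruct j as [|j]; [|reflexivity].
  unfold shifted_pairing. simpl.
  rewrite (RInt_ext _ (fun _ => 0)) by (intros; simpl; ring).
  rewrite RInt_const. apply Rmult_0_r.
Qed.

Lemma shifted_pairing_chebU_pred_r y u N :
  shifted_pairing y u (chebU_pred N) = pred0 (fun M => shifted_pairing y u (chebU M)) N.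
Proof.
  destruct N as [|N]; [|reflexivity].
  unfold shifted_pairing. simpl.
  rewrite (RInt_ext _ (fun _ => 0)) by (intros; simpl; ring).
  rewrite RInt_const. apply Rmult_0_r.
Qed.

Lemma cheb_moment_recurrence y : chebU_recurrence y (cheb_moment y).
Proof.
  intros N j. unfold cheb_moment.
  rewrite <- shifted_pairing_chebU_pred_l, <- shifted_pairing_chebU_pred_r.
  unfold shifted_pairing at 1.
  rewrite (RInt_ext _ (fun x =>
      2 * y * (chebU j x * chebU N (x + y) * sqrt (1 - x ^ 2))
      + chebU (S j) x * chebU N (x + y) * sqrt (1 - x ^ 2)
      + chebU_pred j x * chebU N (x + y) * sqrt (1 - x ^ 2)
      - chebU j x * chebU_pred N (x + y) * sqrt (1 - x ^ 2))).
  - apply RInt_lincomb; apply ex_RInt_shifted_pairing;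
      auto using continuous_chebU, continuous_chebU_pred.
  - intros x _. rewrite (chebU_S N), (chebU_S j). simpl. ring.
Qed.

Lemma cheb_moment_0 y j : cheb_moment y 0 j = match j with O => PI / 2 | S _ => 0 end.
Proof.
  unfold cheb_moment, shifted_pairing.
  rewrite (RInt_ext _ (fun x => chebU j x * sqrt (1 - x ^ 2))) by (intros; simpl; ring).
  apply RInt_chebU_weight.
Qed.

(** * The explicit solution *)

Definition rcoef (j k n : nat) : R :=
  INR (fact (k + j)) * INR (fact (n + k + j + 1)) * INR (n + 1)
  / (INR (fact k) * INR (fact j) * INR (fact (j + 1)) * INR (fact (n + k + 1))).

Lemma rcoef_rec j k n : (j + k <> 0)%nat ->
  rcoef j k n = pred0 (fun i => rcoef i k n) j
                + pred0 (fun i => rcoef j i (S n) - rcoef j i n) k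
                + pred0 (rcoef j k) n.
Proof.
  intros Hjk.
  destruct j as [|j], k as [|k]; [lia| | |]; destruct n as [|n]; unfold pred0, rcoef;
    repeat rewrite ?Nat.add_succ_l, ?Nat.add_succ_r, ?Nat.add_0_r, ?Nat.add_0_l;
    rewrite ?fact_simpl, ?mult_INR, ?S_INR, ?plus_INR; simpl INR;
    repeat match goal with v : nat |- _ =>
      lazymatch goal with _ : 0 <= INR v |- _ => fail | _ => pose proof (pos_INR v) end end;
    field; repeat split; try apply INR_fact_neq_0; lra.
Qed.

(* The y^(m-2k) term of (2/pi) R_{m,n}(y); the constant 1 is R_{0,n} = pi/2. *)
Definition Rterm (y : R) (m n k : nat) : R :=
  if (2 * k + 1 <=? m)%nat then rcoef (m - (2 * k + 1)) k n * (2 * y) ^ (m - 2 * k)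
  else if (m + k =? 0)%nat then 1 else 0.

Lemma Rterm_in y m n k j : m = (2 * k + 1 + j)%nat -> Rterm y m n k = rcoef j k n * (2 * y) ^ S j.
Proof.
  intros ->. unfold Rterm.
  rewrite (proj2 (Nat.leb_le _ _)) by lia.
  do 2 f_equal; lia.
Qed.

Lemma Rterm_out y m n k :
  (m < 2 * k + 1)%nat -> Rterm y m n k = if (m + k =? 0)%nat then 1 else 0.
Proof. intros Hm. unfold Rterm. rewrite (proj2 (Nat.leb_gt _ _)) by lia. reflexivity. Qed.

Lemma Rterm_high y m n k : (m < 2 * k + 1)%nat -> k <> O -> Rterm y m n k = 0.
Proof.
  intros Hm Hk. rewrite Rterm_out by exact Hm.
  rewrite (proj2 (Nat.eqb_neq _ _)) by lia. reflexivity.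
Qed.

Lemma Rterm_rec y m n k :
  Rterm y (S (S m)) n k
  = 2 * y * Rterm y (S m) n k + pred0 (Rterm y m (S n)) k
    + pred0 (fun i => Rterm y (S (S m)) i k) n - pred0 (Rterm y m n) k.
Proof.
  destruct (le_lt_dec (2 * k + 1) (S (S m))) as [Hin|Hout].
  - set (j := (S (S m) - (2 * k + 1))%nat).
    assert (E1 : 2 * y * Rterm y (S m) n k = pred0 (fun i => rcoef i k n) j * (2 * y) ^ S j).
    { destruct j as [|i] eqn:Hj; simpl pred0.
      - rewrite Rterm_high by lia. ring.
      - rewrite (Rterm_in y (S m) n k i) by lia. simpl. ring. }
    assert (E2 : forall b, pred0 (Rterm y m b) k = pred0 (fun i => rcoef j i b) k * (2 * y) ^ S j).
    { intros b. destruct k as [|i]; simpl pred0; [ring|].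
      apply Rterm_in. lia. }
    assert (E3 : pred0 (fun i => Rterm y (S (S m)) i k) n = pred0 (rcoef j k) n * (2 * y) ^ S j).
    { destruct n as [|i]; simpl pred0; [ring|]. apply Rterm_in. lia. }
    rewrite E1, !E2, E3, (Rterm_in y _ n k j) by lia.
    rewrite (rcoef_rec j k n), pred0_minus by lia. ring.
  - rewrite !Rterm_out by lia.
    destruct k as [|k]; [lia|]. destruct n as [|n]; simpl pred0;
      rewrite ?(Rterm_out y (S (S m))), !(Rterm_out y m) by lia; cbn [Nat.add Nat.eqb]; ring.
Qed.

Definition Rpoly (y : R) (m n : nat) : R := sum_f_R0 (Rterm y m n) m.

Lemma Rpoly_ext y m n L : (m <= L)%nat -> Rpoly y m n = sum_f_R0 (Rterm y m n) L.
Proof.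
  intros HmL. symmetry. apply sum_f_R0_zero_tail; [exact HmL|].
  intros k Hk. apply Rterm_high; lia.
Qed.

Lemma Rpoly_rec y m n :
  Rpoly y (S (S m)) n
  = 2 * y * Rpoly y (S m) n + Rpoly y m (S n) + pred0 (Rpoly y (S (S m))) n - Rpoly y m n.
Proof.
  unfold Rpoly at 1. rewrite (sum_eq _ _ _ (fun k _ => Rterm_rec y m n k)).
  rewrite minus_sum, !sum_plus, sum_f_R0_scal_l.
  rewrite <- (Rpoly_ext y (S m) n (S (S m))), !sum_f_R0_pred0, <- !Rpoly_ext by lia.
  destruct n as [|n]; simpl pred0; [|reflexivity].
  rewrite sum_cte. ring.
Qed.

Lemma Rpoly_0 y n : Rpoly y 0 n = 1.
Proof. reflexivity. Qed.

Lemma Rpoly_1 y n : Rpoly y 1 n = 2 * y * (INR n + 1).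
Proof.
  assert (Hc : rcoef 0 0 n = INR n + 1).
  { unfold rcoef. rewrite !Nat.add_0_r, plus_INR. simpl. field. apply INR_fact_neq_0. }
  unfold Rpoly. simpl sum_f_R0.
  rewrite (Rterm_in y 1 n 0 0), (Rterm_high y 1 n 1), Hc by lia. simpl. ring.
Qed.

(* The candidate for (2/pi) M(N, j). *)
Definition Rpoly_family (y : R) (N j : nat) : R :=
  if (j <=? N)%nat then Rpoly y (N - j) j else 0.

Lemma Rpoly_family_le y N j : (j <= N)%nat -> Rpoly_family y N j = Rpoly y (N - j) j.
Proof. intros H. unfold Rpoly_family. rewrite (proj2 (Nat.leb_le _ _) H). reflexivity. Qed.

Lemma Rpoly_family_gt y N j : (N < j)%nat -> Rpoly_family y N j = 0.
Proof. intros H. unfold Rpoly_family. rewrite (proj2 (Nat.leb_gt _ _) H). reflexivity. Qed.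

Lemma Rpoly_family_recurrence y : chebU_recurrence y (Rpoly_family y).
Proof.
  intros N j.
  destruct (lt_eq_lt_dec j N) as [[Hlt| ->]|Hgt].
  - destruct N as [|N]; [lia|].
    rewrite !Rpoly_family_le by lia.
    replace (S (S N) - j)%nat with (S (S (N - j))) by lia.
    replace (S N - j)%nat with (S (N - j)) by lia.
    replace (S N - S j)%nat with (N - j)%nat by lia.
    rewrite Rpoly_rec. simpl pred0. rewrite Rpoly_family_le by lia.
    destruct j as [|j]; simpl pred0; [reflexivity|].
    rewrite Rpoly_family_le by lia.
    replace (S N - j)%nat with (S (S (N - S j))) by lia. reflexivity.
  - rewrite !Rpoly_family_le, (Rpoly_family_gt y N (S N)) by lia.
    rewrite !Nat.sub_diag, Nat.sub_succ_l, Nat.sub_diag, Rpoly_1, Rpoly_0 by lia.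
    destruct N as [|N]; simpl pred0.
    + simpl. ring.
    + rewrite Rpoly_family_le, Rpoly_family_gt by lia.
      rewrite Nat.sub_succ_l, Nat.sub_diag, Rpoly_1, S_INR by lia. ring.
  - destruct j as [|j]; [lia|].
    rewrite (Rpoly_family_gt y N (S (S j))) by lia. simpl pred0.
    destruct (Nat.eq_dec j N) as [->|Hne].
    + rewrite (Rpoly_family_le y (S N)), (Rpoly_family_le y N N), (Rpoly_family_gt y N (S N))
        by lia.
      rewrite !Nat.sub_diag, !Rpoly_0.
      destruct N as [|N]; simpl pred0; [|rewrite Rpoly_family_gt by lia]; ring.
    + rewrite !Rpoly_family_gt by lia.
      destruct N as [|N]; simpl pred0; [|rewrite Rpoly_family_gt by lia]; ring.
Qed.

Lemma Rmn_Rpoly m n y : Rmn m n y = PI / 2 * Rpoly y m n.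
Proof.
  change (Rmn m n y) with (cheb_moment y (n + m) n).
  rewrite (chebU_recurrence_unique y _ (fun N j => PI / 2 * Rpoly_family y N j)).
  - rewrite Rpoly_family_le by lia. do 2 f_equal. lia.
  - apply cheb_moment_recurrence.
  - apply chebU_recurrence_scal, Rpoly_family_recurrence.
  - intros [|j]; rewrite cheb_moment_0.
    + rewrite Rpoly_family_le, Nat.sub_0_r, Rpoly_0 by lia. field.
    + rewrite Rpoly_family_gt by lia. ring.
Qed.

(** * Matching the terminating hypergeometric series *)

Lemma poch_duplication a k : poch (a / 2) k * poch ((a + 1) / 2) k = poch a (2 * k) / 4 ^ k.
Proof.
  induction k as [|k IH]; [simpl; field|].
  replace (2 * S k)%nat with (S (S (2 * k))) by lia.
  cbn [poch pow].
  transitivity (poch (a / 2) k * poch ((a + 1) / 2) k * ((a / 2 + INR k) * ((a + 1) / 2 + INR k)));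
    [ring|].
  assert (4 ^ k <> 0) by (apply pow_nonzero; lra).
  rewrite IH, S_INR, mult_INR. simpl INR. field. assumption.
Qed.

Lemma poch_opp_INR p k : (k <= p)%nat ->
  poch (- INR p) k = (-1) ^ k * INR (fact p) / INR (fact (p - k)).
Proof.
  induction k as [|k IH]; intros Hk.
  - rewrite Nat.sub_0_r. simpl. field. apply INR_fact_neq_0.
  - cbn [poch pow]. rewrite IH by lia.
    replace (p - k)%nat with (S (p - S k)) by lia.
    rewrite fact_simpl, mult_INR, S_INR, minus_INR, S_INR by lia.
    assert (INR k < INR p) by (apply lt_INR; lia).
    field. split; [apply INR_fact_neq_0 | lra].
Qed.

Lemma poch_INR_S a k : poch (INR a + 1) k = INR (fact (a + k)) / INR (fact a).
Proof.
  induction k as [|k IH].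
  - rewrite Nat.add_0_r. simpl. field. apply INR_fact_neq_0.
  - cbn [poch]. rewrite IH, Nat.add_succ_r, fact_simpl, mult_INR, S_INR, plus_INR.
    field. apply INR_fact_neq_0.
Qed.

Lemma le_term_index m k : (k <= term_index m)%nat <-> (2 * k + 1 <= m \/ k = 0)%nat.
Proof.
  unfold term_index. pose proof (Nat.div2_odd (m - 1)) as Hm.
  destruct (Nat.odd (m - 1)); simpl Nat.b2n in Hm; lia.
Qed.

Lemma hyp43_coef_factorial m n k j : m = (2 * k + 1 + j)%nat ->
  hyp43_coef (- INR m / 2) ((1 - INR m) / 2) ((1 - INR m) / 2) ((2 - INR m) / 2)
    (1 - INR m) (- INR m - INR n) (INR n + 2) k * 4 ^ k * 4 ^ k
  = INR (fact m) * INR (fact (k + j)) * INR (fact (n + k + j + 1)) * INR (fact (n + 1))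
    / (INR (fact (j + 1)) * INR (fact j) * INR (fact (m + n)) * INR (fact (n + k + 1))
       * INR (fact k)).
Proof.
  intros Hm.
  assert (Hm1 : 1 - INR m = - INR (m - 1)) by (rewrite minus_INR by lia; simpl; ring).
  assert (Hfact : forall p, INR (fact p) <> 0) by apply INR_fact_neq_0.
  assert (E1 : poch (- INR m / 2) k * poch ((1 - INR m) / 2) k
               = INR (fact m) / INR (fact (j + 1)) / 4 ^ k).
  { replace (1 - INR m) with (- INR m + 1) by ring.
    rewrite poch_duplication, poch_opp_INR, pow_1_even, Rmult_1_l by lia.
    replace (m - 2 * k)%nat with (j + 1)%nat by lia. reflexivity. }
  assert (E2 : poch ((1 - INR m) / 2) k * poch ((2 - INR m) / 2) k
               = INR (fact (m - 1)) / INR (fact j) / 4 ^ k).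
  { replace (2 - INR m) with (1 - INR m + 1) by ring.
    rewrite poch_duplication, Hm1, poch_opp_INR, pow_1_even, Rmult_1_l by lia.
    replace (m - 1 - 2 * k)%nat with j by lia. reflexivity. }
  assert (E3 : poch (1 - INR m) k * poch (- INR m - INR n) k
               = INR (fact (m - 1)) * INR (fact (m + n))
                 / (INR (fact (k + j)) * INR (fact (n + k + j + 1)))).
  { replace (- INR m - INR n) with (- INR (m + n)) by (rewrite plus_INR; ring).
    rewrite Hm1, !poch_opp_INR by lia.
    replace (m - 1 - k)%nat with (k + j)%nat by lia.
    replace (m + n - k)%nat with (n + k + j + 1)%nat by lia.
    assert (Hsign : (-1) ^ k * (-1) ^ k = 1)
      by (rewrite <- pow_add, <- (pow_1_even k); f_equal; lia).
    transitivity ((-1) ^ k * (-1) ^ k * (INR (fact (m - 1)) * INR (fact (m + n))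
                  / (INR (fact (k + j)) * INR (fact (n + k + j + 1))))).
    + field. split; apply Hfact.
    + rewrite Hsign. apply Rmult_1_l. }
  assert (E4 : poch (INR n + 2) k = INR (fact (n + k + 1)) / INR (fact (n + 1))).
  { replace (INR n + 2) with (INR (n + 1) + 1) by (rewrite plus_INR; simpl; ring).
    rewrite poch_INR_S. do 3 f_equal. lia. }
  unfold hyp43_coef.
  rewrite (Rmult_assoc (poch (- INR m / 2) k * poch ((1 - INR m) / 2) k)), E1, E2, E3, E4.
  field. repeat split; try apply Hfact. apply pow_nonzero. lra.
Qed.

Lemma hyp43_term_Rterm m n k y : (k <= term_index m)%nat ->
  PI * INR (fact (m + n)) / (INR (fact m) * INR (fact n)) * 2 ^ m / 2 *
  (hyp43_coef (- INR m / 2) ((1 - INR m) / 2) ((1 - INR m) / 2) ((2 - INR m) / 2)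
     (1 - INR m) (- INR m - INR n) (INR n + 2) k * 4 ^ k * y ^ (m - 2 * k))
  = PI / 2 * Rterm y m n k.
Proof.
  intros Hk. apply le_term_index in Hk.
  destruct (le_lt_dec (2 * k + 1) m) as [Hin|Hout].
  - set (j := (m - (2 * k + 1))%nat).
    assert (Hm : m = (2 * k + 1 + j)%nat) by lia.
    assert (H2m : 2 ^ m = 2 ^ S j * 4 ^ k).
    { rewrite Hm. replace (2 * k + 1 + j)%nat with (S j + 2 * k)%nat by lia.
      rewrite pow_add, pow_mult. replace (2 ^ 2) with 4 by ring. reflexivity. }
    assert (Hfn : INR (fact (n + 1)) = INR (n + 1) * INR (fact n)).
    { rewrite Nat.add_1_r, fact_simpl, mult_INR, <- Nat.add_1_r. reflexivity. }
    rewrite (Rterm_in y m n k j), H2m by lia.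
    replace (m - 2 * k)%nat with (S j) by lia.
    transitivity (PI / 2 * (INR (fact (m + n)) / (INR (fact m) * INR (fact n)) * 2 ^ S j
      * (hyp43_coef (- INR m / 2) ((1 - INR m) / 2) ((1 - INR m) / 2) ((2 - INR m) / 2)
           (1 - INR m) (- INR m - INR n) (INR n + 2) k * 4 ^ k * 4 ^ k) * y ^ S j)).
    { field. split; apply INR_fact_neq_0. }
    rewrite (hyp43_coef_factorial m n k j Hm), Rpow_mult_distr, Hfn. unfold rcoef.
    field. assert (INR (n + 1) <> 0) by (apply not_0_INR; lia).
    repeat split; auto using INR_fact_neq_0.
  - assert (m = O /\ k = O) as [-> ->] by lia.
    rewrite Rterm_out by lia. unfold hyp43_coef. simpl.
    field. apply INR_fact_neq_0.
Qed.

Theorem theorem4 (m n : nat) (y : R) :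
  Rmn m n y =
  PI * INR (fact (m + n)) / (INR (fact m) * INR (fact n)) * 2 ^ m / 2 *
  ym_hyp43_poly m (term_index m)
    (- INR m / 2) ((1 - INR m) / 2) ((1 - INR m) / 2) ((2 - INR m) / 2)
    (1 - INR m) (- INR m - INR n) (INR n + 2) y.
Proof.
  rewrite Rmn_Rpoly. unfold ym_hyp43_poly.
  rewrite <- sum_f_R0_scal_l, (sum_eq _ _ _ (fun k Hk => hyp43_term_Rterm m n k y Hk)).
  rewrite sum_f_R0_scal_l. f_equal.
  apply sum_f_R0_zero_tail.
  - pose proof (proj1 (le_term_index m _) (le_n (term_index m))). lia.
  - intros k Hk.
    assert (Hk' : ~ (k <= term_index m)%nat) by lia. rewrite le_term_index in Hk'.
    apply Rterm_high; lia.
Qed.
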